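(* Let $\mathcal{D}$ be an abstract system of proof notations and $s\in\mathbb{N}$. If $\mathcal{D}$ is $s$-bounded, then for every $d\in\mathbb{E}(\mathcal{D})$ we have $|d|\le\vartheta_d(s)$.
   Context: An abstract system of proof notations is a set $\mathcal{D}$ with functions $|\cdot|,o(\cdot)\colon\mathcal{D}\to\mathbb{N}\setminus\{0\}$ (size and height) and a relation $\to\subseteq\mathcal{D}\times\mathcal{D}$ such that $d\to d'$ implies $o(d')<o(d)$. The cut-elimination closure $\mathbb{E}(\mathcal{D})$ is the abstract system of formal terms inductively generated by: every $d\in\mathcal{D}$ is in $\mathbb{E}(\mathcal{D})$ (with size and height inherited); if $d,e\in\mathbb{E}(\mathcal{D})$ then $\mathsf{I}d,\ \mathsf{R}de,\ \mathsf{E}d\in\mathbb{E}(\mathcal{D})$ ($\mathsf I,\mathsf R,\mathsf E$ new symbols), with $|\mathsf Id|=|d|+1$, $|\mathsf Rde|=|d|+|e|+1$, $|\mathsf Ed|=|d|+1$, $o(\mathsf Id)=o(d)$, $o(\mathsf Rde)=o(d)+o(e)$, $o(\mathsf Ed)=2^{o(d)}-1$. The relation $\to$ on $\mathbb{E}(\mathcal{D})$ is inductively generated by: $d\to d'$ in $\mathcal{D}$ implies $d\to d'$; $d\to d'$ implies $\mathsf Id\to\mathsf Id'$; $e\to e'$ implies $\mathsf Rde\to\mathsf Rde'$; $d\to d'$ implies $\mathsf Ed\to\mathsf Ed'$; $\mathsf Rde\to\mathsf Id$ always; and $d\to d'$ together with $d\to d''$ implies $\mathsf Ed\to\mathsf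 R(\mathsf Ed')(\mathsf Ed'')$. The size function $\vartheta_d\colon\mathbb{N}\to\mathbb{N}$ for $d\in\mathbb{E}(\mathcal{D})$ is defined by recursion: $\vartheta_d(s)=s$ for $d\in\mathcal{D}$; $\vartheta_{\mathsf Id}(s)=\vartheta_d(s)+1$; $\vartheta_{\mathsf Rde}(s)=\max\{|d|+1+\vartheta_e(s),\ \vartheta_d(s)+1\}$; $\vartheta_{\mathsf Ed}(s)=o(d)\cdot(\vartheta_d(s)+2)$. $\mathcal{D}$ is called $s$-bounded if $|d|\le s$ for all $d\in\mathcal{D}$. *)

From Stdlib Require Import Arith PeanoNat.

Record APN := {
  carrier :> Type;
  size : carrier -> nat;
  height : carrier -> nat;
  red : carrier -> carrier -> Prop;
  size_pos : forall d, 0 < size d;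
  height_pos : forall d, 0 < height d;
  red_height : forall d d', red d d' -> height d' < height d
}.

(* Formal terms of the cut-elimination closure E(D). *)
Inductive ETerm (D : APN) : Type :=
| Base : carrier D -> ETerm D
| Iop : ETerm D -> ETerm D
| Rop : ETerm D -> ETerm D -> ETerm D
| Eop : ETerm D -> ETerm D.

Arguments Base {D} _.
Arguments Iop {D} _.
Arguments Rop {D} _ _.
Arguments Eop {D} _.

Fixpoint esize {D : APN} (d : ETerm D) : nat :=
  match d with
  | Base d0 => size D d0
  | Iop d => esize d + 1
  | Rop d e => esize d + esize e + 1
  | Eop d => esize d + 1
  end.

Fixpoint eheight {D : APN} (d : ETerm D) : nat :=
  match d with
  | Base d0 => height D d0
  | Iop d => eheight d
  | Rop d e => eheight d + eheight e
  | Eop d => 2 ^ eheight d - 1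
  end.

Inductive ered {D : APN} : ETerm D -> ETerm D -> Prop :=
| ered_base : forall d d', red D d d' -> ered (Base d) (Base d')
| ered_I : forall d d', ered d d' -> ered (Iop d) (Iop d')
| ered_R : forall d e e', ered e e' -> ered (Rop d e) (Rop d e')
| ered_E : forall d d', ered d d' -> ered (Eop d) (Eop d')
| ered_RI : forall d e, ered (Rop d e) (Iop d)
| ered_ER : forall d d' d'', ered d d' -> ered d d'' ->
    ered (Eop d) (Rop (Eop d') (Eop d'')).

Fixpoint theta {D : APN} (d : ETerm D) (s : nat) : nat :=
  match d with
  | Base _ => s
  | Iop d => theta d s + 1
  | Rop d e => Nat.max (esize d + 1 + theta e s) (theta d s + 1)
  | Eop d => eheight d * (theta d s + 2)
  end.

Definition s_bounded (D : APN) (s : nat) : Prop :=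
  forall d : carrier D, size D d <= s.

From Stdlib Require Import Arith Lia.

(* Induction on d.  The only non-immediate case is [Eop d], where
   [theta (Eop d) s = o(d) * (theta d s + 2)]: it suffices that the
   height factor is at least 1, since [2 ^ o - 1 >= 1] for [o >= 1]. *)

Lemma eheight_pos (D : APN) (d : ETerm D) : 0 < eheight d.
Proof.
  induction d as [c | d IHd | d IHd e IHe | d IHd]; simpl.
  - exact (height_pos D c).
  - exact IHd.
  - lia.
  - assert (2 ^ 1 <= 2 ^ eheight d) by (apply Nat.pow_le_mono_r; lia).
    simpl in *; lia.
Qed.

Theorem mainTheorem4 (D : APN) (s : nat) :
  s_bounded D s -> forall d : ETerm D, esize d <= theta d s.
Proof.
  intros Hs d; induction d as [c | d IHd | d IHd e IHe | d IHd]; simpl.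
  - apply Hs.
  - lia.
  - lia.
  - assert (theta d s + 2 <= eheight d * (theta d s + 2))
      by (apply Nat.le_mul_l; pose proof (eheight_pos D d); lia).
    lia.
Qed.
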